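(* Let $m \le n$ and $1 \le k \le m$. Let $X$ be a positive semidefinite operator on $\mathcal{H}_n \otimes \mathcal{H}_m$, and let $\Phi : \mathcal{L}(\mathcal{H}_m) \to \mathcal{L}(\mathcal{H}_m)$ be completely positive and trace-preserving. Then \[ \|(id_n \otimes \Phi^\dagger)(X)\|_{S(k)} \le \|X\|_{S(k)}. \]
   Context: $\mathcal{H}_d = \mathbb{C}^d$, $\mathcal{L}(\mathcal{H})$ denotes the linear operators on $\mathcal{H}$, $id_n$ is the identity map on $\mathcal{L}(\mathcal{H}_n)$, and $m\le n$. The dual map $\Phi^\dagger$ is defined by $\mathrm{Tr}(\Phi(A)B) = \mathrm{Tr}(A\,\Phi^\dagger(B))$ for all $A,B$. $SR$ denotes Schmidt rank, i.e. the number of nonzero singular values of the coefficient matrix of a vector in $\mathcal{H}_n\otimes\mathcal{H}_m$. $\|Y\|_{S(k)} := \sup\{|\langle w|Y|v\rangle| : |v\rangle,|w\rangle \text{ unit vectors in } \mathcal{H}_n\otimes\mathcal{H}_m, SR(|v\rangle),SR(|w\rangle)\le k\}$. *)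

From HB Require Import structures.
From mathcomp Require Import all_boot all_order all_algebra.
From mathcomp Require Import complex mxtens.
From mathcomp Require Import boolp classical_sets reals.
Set Implicit Arguments.
Unset Strict Implicit.
Unset Printing Implicit Defensive.
Import Order.TTheory GRing.Theory Num.Theory.
Local Open Scope ring_scope.
Local Open Scope complex_scope.
Local Open Scope classical_set_scope.

Section QDefs.
Variable R : realType.
Local Notation C := R[i].

Definition adjmx (p q : nat) (A : 'M[C]_(p, q)) : 'M[C]_(q, p) :=
  (map_mx Num.conj A)^T.

Definition cmod (z : C) : R := complex.Re `|z|.

Definition psd (N : nat) (X : 'M[C]_N) : Prop :=
  adjmx X = X /\ forall v : 'cV[C]_N, 0 <= (adjmx v *m X *m v) 0 0.

(* Tensor-product basis of H_n (x) H_m = C^(n*m): |i>|a> is the basis vector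
   of index mxtens_index (i, a) = i * m + a (Kronecker convention). *)

Definition id_tens (n m : nat) (Phi : 'M[C]_m -> 'M[C]_m)
  (X : 'M[C]_(n * m)) : 'M[C]_(n * m) :=
  let blk (i j : 'I_n) : 'M[C]_m :=
    \matrix_(a, b) X (mxtens_index (i, a)) (mxtens_index (j, b)) in
  \matrix_(p, q) Phi (blk (mxtens_unindex p).1 (mxtens_unindex q).1)
                     (mxtens_unindex p).2 (mxtens_unindex q).2.

Definition completely_positive (m : nat) (Phi : 'M[C]_m -> 'M[C]_m) : Prop :=
  forall (r : nat) (X : 'M[C]_(r * m)), psd X -> psd (id_tens Phi X).

Definition trace_preserving (m : nat) (Phi : 'M[C]_m -> 'M[C]_m) : Prop :=
  forall A : 'M[C]_m, \tr (Phi A) = \tr A.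

Definition is_dual_map (m : nat) (Phi Psi : 'M[C]_m -> 'M[C]_m) : Prop :=
  forall A B : 'M[C]_m, \tr (Phi A *m B) = \tr (A *m Psi B).

Definition coef_mx (n m : nat) (v : 'cV[C]_(n * m)) : 'M[C]_(n, m) :=
  \matrix_(i, a) v (mxtens_index (i, a)) 0.

Definition schmidt_rank (n m : nat) (v : 'cV[C]_(n * m)) : nat :=
  \rank (coef_mx v).

Definition unit_vec (N : nat) (v : 'cV[C]_N) : Prop :=
  (adjmx v *m v) 0 0 = 1.

Definition S_norm (n m k : nat) (Y : 'M[C]_(n * m)) : R :=
  sup [set r : R | exists (v w : 'cV[C]_(n * m)),
         [/\ unit_vec v, unit_vec w,
             (schmidt_rank v <= k)%N, (schmidt_rank w <= k)%N &
             r = cmod ((adjmx w *m Y *m v) 0 0)]].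

End QDefs.

From HB Require Import structures.
From mathcomp Require Import all_boot all_order all_algebra.
From mathcomp Require Import complex mxtens spectral sesquilinear.
From mathcomp Require Import boolp classical_sets reals.
From mathcomp Require Import ring.
Import Order.TTheory GRing.Theory Num.Theory.
Set Implicit Arguments.
Unset Strict Implicit.
Unset Printing Implicit Defensive.
Local Open Scope ring_scope.

(** By duality, <w|(id ⊗ Φ^†)(X)|v> = F(v w^†) for the linear functional
    F(M) = Tr((id ⊗ Φ)(M) X), which is positive because Φ is completely positive
    and X is positive semidefinite.  A positive functional satisfies
    2|F(v w^†)| <= F(v v^†) + F(w w^†), so it suffices to show
    F(v v^†) <= ||X||_{S(k)} for unit vectors v of Schmidt rank at most k.
    Such a v is (W ⊗ 1) u with W an isometry from C^r, r <= k.  Writing the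
    positive matrix (id_r ⊗ Φ)(u u^†) as Σ_l b_l b_l^†, we get
    F(v v^†) = Σ_l <(W ⊗ 1) b_l|X|(W ⊗ 1) b_l>, where every (W ⊗ 1) b_l has
    Schmidt rank at most r, and Σ_l ||b_l||^2 = Tr(u u^†) = 1 because Φ is
    trace preserving. *)

Section SchmidtNormContraction.
Variable R : realType.
Local Notation C := R[i].
Local Notation sqnorm u := ((adjmx u *m u) 0 0).

Lemma adjmxE p q (A : 'M[C]_(p, q)) i j : adjmx A i j = (A j i)^*.
Proof. by rewrite !mxE. Qed.

Lemma adjmxM p q r (A : 'M[C]_(p, q)) (B : 'M[C]_(q, r)) :
  adjmx (A *m B) = adjmx B *m adjmx A.
Proof. by rewrite /adjmx map_mxM trmx_mul. Qed.

Lemma adjmxK p q (A : 'M[C]_(p, q)) : adjmx (adjmx A) = A.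
Proof. by apply/matrixP=> i j; rewrite !mxE conjCK. Qed.

Lemma adjmxD p q (A B : 'M[C]_(p, q)) : adjmx (A + B) = adjmx A + adjmx B.
Proof. by apply/matrixP=> i j; rewrite !mxE rmorphD. Qed.

Lemma adjmxZ p q (a : C) (A : 'M[C]_(p, q)) : adjmx (a *: A) = a^* *: adjmx A.
Proof. by apply/matrixP=> i j; rewrite !mxE rmorphM. Qed.

Lemma adjmx1 p : adjmx (1%:M : 'M[C]_p) = 1%:M.
Proof. by rewrite /adjmx map_mx1 trmx1. Qed.

Lemma adjmx_tens p q p' q' (A : 'M[C]_(p, q)) (B : 'M[C]_(p', q')) :
  adjmx (A *t B) = adjmx A *t adjmx B.
Proof.
apply/matrixP => x y; case: (mxtens_indexP x) => i a; case: (mxtens_indexP y) => j b.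
by rewrite adjmxE !tensmxE !adjmxE rmorphM.
Qed.

Lemma trmxC_adjmx p q (A : 'M[C]_(p, q)) : (A ^t* = adjmx A)%sesqui.
Proof. by rewrite /adjmx map_trmx. Qed.

Lemma sqnormE p (u : 'cV[C]_p) : sqnorm u = \sum_i `|u i 0| ^+ 2.
Proof. by rewrite mxE; apply: eq_bigr => i _; rewrite adjmxE normCKC. Qed.

Lemma sqnorm_ge0 p (u : 'cV[C]_p) : 0 <= sqnorm u.
Proof. by rewrite sqnormE sumr_ge0 // => i _; rewrite exprn_ge0. Qed.

Lemma sqnorm_eq0 p (u : 'cV[C]_p) : sqnorm u = 0 -> u = 0.
Proof.
rewrite sqnormE => u0; apply/matrixP => i j; rewrite (ord1 j) mxE.
have /eqP := psumr_eq0P (fun l _ => exprn_ge0 2 (normr_ge0 (u l 0))) u0 (i := i) isT.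
by rewrite expf_eq0 /= normr_eq0 => /eqP.
Qed.

Lemma unit_vec_entry_le1 p (u : 'cV[C]_p) i : unit_vec u -> `|u i 0| <= 1.
Proof.
rewrite /unit_vec sqnormE (bigD1 i) //= => u1.
rewrite -(expr_le1 (n := 2)) // -u1 lerDl.
by apply: sumr_ge0 => l _; rewrite exprn_ge0.
Qed.

Lemma mulmx_diag_entry p q (A : 'M[C]_(p, q)) (P : 'M[C]_q) (B : 'M[C]_(q, p)) l :
  (A *m P *m B) l l = (row l A *m P *m col l B) 0 0.
Proof.
rewrite !mxE; apply: eq_bigr => j _; rewrite !mxE; congr (_ * _).
by apply: eq_bigr => k _; rewrite !mxE.
Qed.

Lemma psd_outer p (x : 'cV[C]_p) : psd (x *m adjmx x).
Proof.
split; first by rewrite adjmxM adjmxK.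
move=> y; rewrite mulmxA -(mulmxA (adjmx y *m x)).
have -> : adjmx x *m y = adjmx (adjmx y *m x) by rewrite adjmxM adjmxK.
by rewrite mxE big_ord1 adjmxE -normCK exprn_ge0.
Qed.

Lemma psd_factor p (P : 'M[C]_p) : psd P -> exists B : 'M[C]_p, P = B *m adjmx B.
Proof.
move=> [P_herm P_pos].
have P_normal : P \is normalmx by apply/normalmxP; rewrite trmxC_adjmx P_herm.
have := orthomx_spectralP P_normal.
set U := spectralmx P; set d := spectral_diag P => P_diag.
rewrite invmx_unitary ?spectral_unitarymx // in P_diag.
have UU : U *m (U ^t*)%sesqui = 1%:M by apply/unitarymxP/spectral_unitarymx.
have d_ge0 l : 0 <= d 0 l.
  have -> : d 0 l = (U *m P *m (U ^t*)%sesqui) l l.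
    by rewrite P_diag !mulmxA UU mul1mx -!mulmxA UU mulmx1 mxE eqxx mulr1n.
  rewrite mulmx_diag_entry.
  have -> : row l U = adjmx (col l (U ^t*)%sesqui).
    by apply/rowP => j; rewrite !mxE conjCK.
  exact: P_pos.
pose s := \row_l sqrtC (d 0 l).
have s_herm : adjmx (diag_mx s) = diag_mx s.
  apply/matrixP => i j; rewrite !mxE rmorphMn /= eq_sym.
  by case: eqP => [->|_]; rewrite ?mulr1n ?mulr0n // conj_Creal // sqrtC_real.
exists ((U ^t*)%sesqui *m diag_mx s).
rewrite {1}P_diag !trmxC_adjmx adjmxM adjmxK s_herm.
rewrite mulmxA -[_ *m diag_mx s *m diag_mx s]mulmxA mulmx_diag.
by congr (_ *m diag_mx _ *m _); apply/rowP => l; rewrite !mxE -expr2 sqrtCK.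
Qed.

Lemma mxtrace_outer_mul p q (B : 'M[C]_(p, q)) (X : 'M[C]_p) :
  \tr (B *m adjmx B *m X) = \sum_l (adjmx (col l B) *m X *m col l B) 0 0.
Proof.
rewrite -mulmxA mxtrace_mulC /mxtrace; apply: eq_bigr => l _.
have row_adjB : row l (adjmx B) = adjmx (col l B) by apply/rowP => j; rewrite !mxE.
by rewrite [LHS]mulmx_diag_entry row_adjB.
Qed.

Lemma mxtrace_psd_mul_ge0 p (P X : 'M[C]_p) : psd P -> psd X -> 0 <= \tr (P *m X).
Proof.
move=> /psd_factor [B ->] [_ X_pos]; rewrite mxtrace_outer_mul.
by apply: sumr_ge0 => l _; apply: X_pos.
Qed.

Lemma sum_mxtens (V : nmodType) n m (F : 'I_(n * m) -> V) :
  \sum_(x < n * m) F x = \sum_(i < n) \sum_(a < m) F (mxtens_index (i, a)).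
Proof.
rewrite pair_big /= (reindex (@mxtens_index n m)) /=; first by apply: eq_bigr => -[].
by exists (@mxtens_unindex n m) => x _; rewrite (mxtens_indexK, mxtens_unindexK).
Qed.

Definition blk n m (M : 'M[C]_(n * m)) (i j : 'I_n) : 'M[C]_m :=
  \matrix_(a, b) M (mxtens_index (i, a)) (mxtens_index (j, b)).

Lemma id_tensE n m (Phi : 'M[C]_m -> 'M[C]_m) (M : 'M[C]_(n * m)) i a j b :
  id_tens Phi M (mxtens_index (i, a)) (mxtens_index (j, b)) = Phi (blk M i j) a b.
Proof. by rewrite /id_tens mxE !mxtens_indexK. Qed.

Lemma blk_id_tens n m (Phi : 'M[C]_m -> 'M[C]_m) (M : 'M[C]_(n * m)) i j :
  blk (id_tens Phi M) i j = Phi (blk M i j).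
Proof. by apply/matrixP => a b; rewrite mxE id_tensE. Qed.

Lemma blk_inj n m (M N : 'M[C]_(n * m)) :
  (forall i j, blk M i j = blk N i j) -> M = N.
Proof.
move=> MN; apply/matrixP => x y.
case: (mxtens_indexP x) => i a; case: (mxtens_indexP y) => j b.
by have := congr1 (fun B : 'M[C]_m => B a b) (MN i j); rewrite !mxE.
Qed.

Lemma blkD n m (M N : 'M[C]_(n * m)) i j : blk (M + N) i j = blk M i j + blk N i j.
Proof. by apply/matrixP => a b; rewrite !mxE. Qed.

Lemma blkZ n m (c : C) (M : 'M[C]_(n * m)) i j : blk (c *: M) i j = c *: blk M i j.
Proof. by apply/matrixP => a b; rewrite !mxE. Qed.

Section LinearBlockMap.
Variables (n m : nat) (Phi : {linear 'M[C]_m -> 'M[C]_m}).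

Lemma id_tensD (M N : 'M[C]_(n * m)) :
  id_tens Phi (M + N) = id_tens Phi M + id_tens Phi N.
Proof. by apply: blk_inj => i j; rewrite !(blkD, blk_id_tens) linearD. Qed.

Lemma id_tensZ (c : C) (M : 'M[C]_(n * m)) :
  id_tens Phi (c *: M) = c *: id_tens Phi M.
Proof. by apply: blk_inj => i j; rewrite !(blkZ, blk_id_tens) linearZ. Qed.

End LinearBlockMap.

Lemma sum_mx1_mull m (F : 'I_m -> C) a : \sum_c (1%:M : 'M[C]_m) a c * F c = F a.
Proof.
rewrite (bigD1 a) //= big1 ?addr0; first by rewrite mxE eqxx mul1r.
by move=> c ca; rewrite mxE eq_sym (negbTE ca) mul0r.
Qed.

Lemma sum_mx1_mulr m (F : 'I_m -> C) a : \sum_c F c * (1%:M : 'M[C]_m) c a = F a.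
Proof. by rewrite -[RHS]sum_mx1_mull; apply: eq_bigr => c _; rewrite mulrC !mxE eq_sym. Qed.

Lemma mulmx_tens1E n r m p (W : 'M[C]_(n, r)) (M : 'M[C]_(r * m, p)) i a q :
  ((W *t 1%:M) *m M) (mxtens_index (i, a)) q
  = \sum_s W i s * M (mxtens_index (s, a)) q.
Proof.
rewrite mxE sum_mxtens; apply: eq_bigr => s _.
under eq_bigr do rewrite tensmxE -mulrA.
by rewrite -mulr_sumr sum_mx1_mull.
Qed.

Lemma tens1_mulmxE n r m p (V : 'M[C]_(r, n)) (N : 'M[C]_(p, r * m)) q j b :
  (N *m (V *t 1%:M)) q (mxtens_index (j, b))
  = \sum_t N q (mxtens_index (t, b)) * V t j.
Proof.
rewrite mxE sum_mxtens; apply: eq_bigr => t _.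
under eq_bigr do rewrite tensmxE mulrCA mulrA.
by rewrite sum_mx1_mulr mulrC.
Qed.

Lemma blk_conj_tens1 n r m (W : 'M[C]_(n, r)) (M : 'M[C]_(r * m)) i j :
  blk ((W *t 1%:M) *m M *m adjmx (W *t 1%:M)) i j
  = \sum_s \sum_t (W i s * (W j t)^*) *: blk M s t.
Proof.
apply/matrixP => a b; rewrite [LHS]mxE adjmx_tens adjmx1 tens1_mulmxE summxE.
under eq_bigr do rewrite mulmx_tens1E mulr_suml.
rewrite exchange_big; apply: eq_bigr => s _; rewrite summxE; apply: eq_bigr => t _.
by rewrite !mxE mulrAC.
Qed.

Lemma id_tens_conj_tens1 n r m (Phi : {linear 'M[C]_m -> 'M[C]_m})
    (W : 'M[C]_(n, r)) (M : 'M[C]_(r * m)) :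
  id_tens Phi ((W *t 1%:M) *m M *m adjmx (W *t 1%:M))
  = (W *t 1%:M) *m id_tens Phi M *m adjmx (W *t 1%:M).
Proof.
apply: blk_inj => i j; rewrite blk_id_tens !blk_conj_tens1 linear_sum.
apply: eq_bigr => s _; rewrite linear_sum; apply: eq_bigr => t _.
by rewrite linearZ blk_id_tens.
Qed.

Lemma mxtrace_id_tens n m (Phi : 'M[C]_m -> 'M[C]_m) (M : 'M[C]_(n * m)) :
  trace_preserving Phi -> \tr (id_tens Phi M) = \tr M.
Proof.
move=> Phi_tr; rewrite /mxtrace !sum_mxtens; apply: eq_bigr => i _.
under eq_bigr do rewrite id_tensE.
by rewrite -/(\tr _) Phi_tr; apply: eq_bigr => a _; rewrite mxE.
Qed.

Lemma qform_id_tens n m (Psi : 'M[C]_m -> 'M[C]_m) (X : 'M[C]_(n * m))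
    (v w : 'cV[C]_(n * m)) :
  (adjmx w *m id_tens Psi X *m v) 0 0 =
  \sum_j \sum_i \tr (blk (v *m adjmx w) j i *m Psi (blk X i j)).
Proof.
rewrite mxE sum_mxtens; apply: eq_bigr => j _.
rewrite exchange_big /=; apply: eq_bigr => b _.
rewrite mxE sum_mxtens mulr_suml; apply: eq_bigr => i _.
rewrite [RHS]mxE mulr_suml; apply: eq_bigr => a _.
by rewrite id_tensE !mxE big_ord1 !mxE [LHS]mulrC mulrA.
Qed.

Lemma mxtrace_id_tens_mul n m (Phi : 'M[C]_m -> 'M[C]_m) (M X : 'M[C]_(n * m)) :
  \tr (id_tens Phi M *m X) = \sum_j \sum_i \tr (Phi (blk M j i) *m blk X i j).
Proof.
rewrite /mxtrace sum_mxtens; apply: eq_bigr => j _.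
under eq_bigr => b _.
  rewrite mxE sum_mxtens; under eq_bigr do under eq_bigr do rewrite id_tensE.
  over.
rewrite exchange_big /=; apply: eq_bigr => i _.
by apply: eq_bigr => b _; rewrite mxE; apply: eq_bigr => a _; rewrite !mxE.
Qed.

Lemma qform_id_tens_dual n m (Phi Psi : 'M[C]_m -> 'M[C]_m) (X : 'M[C]_(n * m))
    (v w : 'cV[C]_(n * m)) : is_dual_map Phi Psi ->
  (adjmx w *m id_tens Psi X *m v) 0 0 = \tr (id_tens Phi (v *m adjmx w) *m X).
Proof.
move=> dual; rewrite qform_id_tens mxtrace_id_tens_mul.
by apply: eq_bigr => j _; apply: eq_bigr => i _; rewrite dual.
Qed.

Lemma coef_mx_inj n m : injective (@coef_mx R n m).
Proof.
move=> u u' uu'; apply/matrixP => x j; rewrite (ord1 j).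
case: (mxtens_indexP x) => i a.
by have := congr1 (fun M : 'M[C]_(n, m) => M i a) uu'; rewrite !mxE.
Qed.

Lemma coef_mxZ n m (c : C) (u : 'cV[C]_(n * m)) : coef_mx (c *: u) = c *: coef_mx u.
Proof. by apply/matrixP => i a; rewrite !mxE. Qed.

Lemma schmidt_rankZ n m (c : C) (u : 'cV[C]_(n * m)) :
  (schmidt_rank (c *: u) <= schmidt_rank u)%N.
Proof. by rewrite /schmidt_rank coef_mxZ -mul_scalar_mx mxrankM_maxr. Qed.

Lemma coef_mx_tens1 n r m (W : 'M[C]_(n, r)) (u : 'cV[C]_(r * m)) :
  coef_mx ((W *t 1%:M) *m u) = W *m coef_mx u.
Proof.
apply/matrixP => i a; rewrite [LHS]mxE mulmx_tens1E mxE.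
by apply: eq_bigr => s _; rewrite mxE.
Qed.

Lemma schmidt_rank_tens1 n r m (W : 'M[C]_(n, r)) (u : 'cV[C]_(r * m)) :
  (schmidt_rank ((W *t 1%:M) *m u) <= r)%N.
Proof.
rewrite /schmidt_rank coef_mx_tens1.
exact: leq_trans (mxrankM_maxl _ _) (rank_leq_col _).
Qed.

Lemma tens1mx1 n m : (1%:M : 'M[C]_n) *t (1%:M : 'M[C]_m) = 1%:M.
Proof.
apply/matrixP => x y; case: (mxtens_indexP x) => i a; case: (mxtens_indexP y) => j b.
rewrite tensmxE !mxE (inj_eq (can_inj (@mxtens_indexK n m))) xpair_eqE.
by case: (i == j); case: (a == b); rewrite ?mulr1n ?mulr0n ?mulr1 ?mulr0.
Qed.

Lemma sqnorm_isometry_tens1 n r m (W : 'M[C]_(n, r)) (u : 'cV[C]_(r * m)) :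
  adjmx W *m W = 1%:M -> sqnorm ((W *t (1%:M : 'M[C]_m)) *m u) = sqnorm u.
Proof.
move=> W_iso; rewrite adjmxM adjmx_tens adjmx1 -mulmxA (mulmxA (_ *t _)) tensmx_mul.
by rewrite W_iso mulmx1 tens1mx1 mul1mx.
Qed.

Lemma schmidt_factor n m (v : 'cV[C]_(n * m)) :
  exists r (W : 'M[C]_(n, r)) (u : 'cV[C]_(r * m)),
    [/\ (r <= schmidt_rank v)%N, adjmx W *m W = 1%:M & v = (W *t 1%:M) *m u].
Proof.
set Cv := coef_mx v; set r := \rank Cv^T.
set U := schmidt (row_base Cv^T).
have UU : U *m (U ^t*)%sesqui = 1%:M by apply/unitarymxP/schmidt_unitarymx/rank_leq_col.
have [D CvD] : exists D, Cv^T = D *m U.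
  by apply/submxP/(submx_trans _ (schmidt_sub _)); rewrite eq_row_base.
pose u : 'cV[C]_(r * m) := \col_x D^T (mxtens_unindex x).1 (mxtens_unindex x).2.
exists r, U^T, u; split; first by rewrite /r mxrank_tr.
  have -> : adjmx U^T = ((U ^t*)%sesqui)^T by apply/matrixP => i j; rewrite !mxE.
  by rewrite -trmx_mul UU trmx1.
apply: (@coef_mx_inj n m); rewrite coef_mx_tens1 -/Cv; apply: trmx_inj.
apply: etrans CvD _; rewrite trmx_mul trmxK; congr (_ *m _).
by apply/matrixP => a s; rewrite !mxE mxtens_indexK.
Qed.

Definition S_norm_set n m k (Y : 'M[C]_(n * m)) : set R :=
  [set r : R | exists (v w : 'cV[C]_(n * m)),
         [/\ unit_vec v, unit_vec w,
             (schmidt_rank v <= k)%N, (schmidt_rank w <= k)%N &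
             r = cmod ((adjmx w *m Y *m v) 0 0)]].

Lemma S_normE n m k (Y : 'M[C]_(n * m)) : S_norm k Y = sup (S_norm_set k Y).
Proof. by []. Qed.

Lemma ler_Re (x y : C) : x <= y -> complex.Re x <= complex.Re y.
Proof. by rewrite lecE => /andP []. Qed.

Lemma cmod_le (z : C) (s : R) : `|z| <= (s%:C)%C -> cmod z <= s.
Proof. exact: ler_Re. Qed.

Lemma qform_unit_le p (Y : 'M[C]_p) (v w : 'cV[C]_p) : unit_vec v -> unit_vec w ->
  `|(adjmx w *m Y *m v) 0 0| <= \sum_y \sum_x `|Y x y|.
Proof.
move=> v1 w1; rewrite mxE; apply: le_trans (ler_norm_sum _ _ _) _.
apply: ler_sum => y _; rewrite normrM.
apply: le_trans (ler_wpM2l (normr_ge0 _) (unit_vec_entry_le1 y v1)) _; rewrite mulr1.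
rewrite mxE; apply: le_trans (ler_norm_sum _ _ _) _.
apply: ler_sum => x _; rewrite normrM adjmxE norm_conjC mulrC.
by apply: ler_piMr; rewrite ?unit_vec_entry_le1.
Qed.

Lemma S_norm_ge n m k (Y : 'M[C]_(n * m)) r : S_norm_set k Y r -> r <= S_norm k Y.
Proof.
move=> Yr; apply: sup_upper_bound => //; split; first by exists r.
exists (complex.Re (\sum_y \sum_x `|Y x y|)) => _ [v [w [v1 w1 _ _ ->]]].
exact/ler_Re/qform_unit_le.
Qed.

Lemma S_norm_set_neq0 n m k (Y : 'M[C]_(n * m)) :
  (0 < n)%N -> (0 < m)%N -> (0 < k)%N -> (S_norm_set k Y !=set0)%classic.
Proof.
move=> n_gt0 m_gt0 k_gt0; pose i0 := Ordinal n_gt0; pose a0 := Ordinal m_gt0.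
pose e : 'cV[C]_(n * m) := delta_mx (mxtens_index (i0, a0)) 0.
have e1 : unit_vec e.
  by rewrite /unit_vec sqnormE (bigD1 (mxtens_index (i0, a0))) //= big1 ?addr0;
    [rewrite mxE !eqxx normr1 expr1n | move=> x x0; rewrite mxE (negbTE x0) normr0 expr0n].
have e_rank : (schmidt_rank e <= k)%N.
  rewrite /schmidt_rank; have -> : coef_mx e = delta_mx i0 a0.
    apply/matrixP => i a; rewrite !mxE (inj_eq (can_inj (@mxtens_indexK n m))).
    by rewrite xpair_eqE andbT.
  by rewrite mxrank_delta.
by exists (cmod ((adjmx e *m Y *m e) 0 0)), e, e.
Qed.

Lemma psd_qform_le_S_norm n m k (X : 'M[C]_(n * m)) (u : 'cV[C]_(n * m)) :
  psd X -> (schmidt_rank u <= k)%N ->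
  (adjmx u *m X *m u) 0 0 <= ((S_norm k X)%:C)%C * sqnorm u.
Proof.
move=> [_ X_pos] u_rank.
have [u0|u_neq0] := eqVneq (sqnorm u) 0.
  by rewrite (sqnorm_eq0 u0) !mulmx0 !mxE mulr0.
set q := (adjmx u *m X *m u) 0 0; set t := sqnorm u.
have t_gt0 : 0 < t by rewrite lt_def u_neq0 sqnorm_ge0.
pose c := (sqrtC t)^-1.
have c_real : c^* = c by rewrite conj_Creal // rpredV sqrtC_real //; apply: ltW.
have cc : c * c = t^-1 by rewrite -expr2 exprVn sqrtCK.
have cu1 : unit_vec (c *: u).
  by rewrite /unit_vec adjmxZ -scalemxAl -scalemxAr scalerA c_real cc mxE mulVf.
have cu_q : (adjmx (c *: u) *m X *m (c *: u)) 0 0 = q / t.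
  by rewrite adjmxZ -!scalemxAl -scalemxAr scalerA c_real cc mxE mulrC.
have qt_ge0 : 0 <= q / t by rewrite divr_ge0 ?X_pos ?ltW.
have : S_norm_set k X (cmod (q / t)).
  by exists (c *: u), (c *: u); split; rewrite ?cu_q ?(leq_trans (schmidt_rankZ _ _)).
move/S_norm_ge; rewrite /cmod ger0_norm // -lecR RRe_real ?ger0_real //.
by rewrite ler_pdivrMr.
Qed.

Lemma mxtrace_id_tens_outer_le n m k (Phi : {linear 'M[C]_m -> 'M[C]_m})
    (X : 'M[C]_(n * m)) (s : R) (v : 'cV[C]_(n * m)) :
  completely_positive Phi -> trace_preserving Phi ->
  (forall u : 'cV[C]_(n * m), (schmidt_rank u <= k)%N ->
     (adjmx u *m X *m u) 0 0 <= (s%:C)%C * sqnorm u) ->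
  (schmidt_rank v <= k)%N ->
  \tr (id_tens Phi (v *m adjmx v) *m X) <= (s%:C)%C * sqnorm v.
Proof.
move=> Phi_cp Phi_tr X_le v_rank.
have [r [W [u [r_le W_iso ->]]]] := schmidt_factor v.
have [B uB] := psd_factor (Phi_cp _ _ (psd_outer u)).
set T := W *t 1%:M.
have -> : id_tens Phi ((T *m u) *m adjmx (T *m u)) = (T *m B) *m adjmx (T *m B).
  by rewrite adjmxM mulmxA -(mulmxA T u) id_tens_conj_tens1 uB adjmxM !mulmxA.
have B_sqnorm : \sum_l sqnorm (col l B) = sqnorm u.
  have := mxtrace_outer_mul B 1%:M.
  rewrite mulmx1 -uB mxtrace_id_tens // mxtrace_mulC trace_mx11 => ->.
  by apply: eq_bigr => l _; rewrite mulmx1.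
rewrite mxtrace_outer_mul sqnorm_isometry_tens1 // -B_sqnorm mulr_sumr.
apply: ler_sum => l _; rewrite -(sqnorm_isometry_tens1 (col l B) W_iso).
have -> : col l (T *m B) = T *m col l B by rewrite !colE mulmxA.
by apply: X_le; apply: leq_trans (schmidt_rank_tens1 _ _) (leq_trans r_le v_rank).
Qed.

Lemma conj_eq_of_real_parts (z1 z2 : C) : (z1 + z2)^* = z1 + z2 ->
  ('i * (z2 - z1))^* = 'i * (z2 - z1) -> z2 = z1^*.
Proof.
rewrite rmorphD rmorphM rmorphB /= conjCi => sum_real diff_real.
have i_neq0 : 'i != 0 :> C by rewrite neq0Ci.
have diff_eq : z1^* - z2^* = z2 - z1.
  by apply: (mulfI i_neq0); rewrite -diff_real mulNr -mulrN opprB.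
have two_neq0 : 2 != 0 :> C by rewrite pnatr_eq0.
have -> : z2 = ((z1 + z2) + (z2 - z1)) / 2 by field.
have -> : z1^* = ((z1^* + z2^*) + (z1^* - z2^*)) / 2 by field.
by rewrite sum_real diff_eq.
Qed.

Section PositiveFunctional.
Variables (p : nat) (F : 'M[C]_p -> C).
Hypothesis FD : forall M N, F (M + N) = F M + F N.
Hypothesis FZ : forall a M, F (a *: M) = a * F M.
Hypothesis F_ge0 : forall u : 'cV[C]_p, 0 <= F (u *m adjmx u).

Lemma F_outer_addZ (v w : 'cV[C]_p) (c : C) :
  F ((v + c *: w) *m adjmx (v + c *: w)) =
  F (v *m adjmx v) + c^* * F (v *m adjmx w) + c * F (w *m adjmx v)
  + c * c^* * F (w *m adjmx w).
Proof.
rewrite adjmxD adjmxZ mulmxDl !mulmxDr -!scalemxAl -!scalemxAr scalerA.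
by rewrite !FD !FZ !addrA.
Qed.

Lemma F_outer_conj (v w : 'cV[C]_p) : F (w *m adjmx v) = (F (v *m adjmx w))^*.
Proof.
have F_real (u : 'cV[C]_p) : (F (u *m adjmx u))^* = F (u *m adjmx u).
  by rewrite conj_Creal // ger0_real.
apply: conj_eq_of_real_parts.
- have -> : F (v *m adjmx w) + F (w *m adjmx v)
      = F ((v + 1 *: w) *m adjmx (v + 1 *: w)) - F (v *m adjmx v) - F (w *m adjmx w).
    by rewrite F_outer_addZ conjC1 !mul1r; ring.
  by rewrite !rmorphB /= !F_real.
- have -> : 'i * (F (w *m adjmx v) - F (v *m adjmx w))
      = F ((v + 'i *: w) *m adjmx (v + 'i *: w)) - F (v *m adjmx v) - F (w *m adjmx w).
    by rewrite F_outer_addZ conjCi mulrN -expr2 sqrCi opprK mul1r; ring.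
  by rewrite !rmorphB /= !F_real.
Qed.

Lemma F_outer_norm_le (v w : 'cV[C]_p) :
  `|F (v *m adjmx w)| *+ 2 <= F (v *m adjmx v) + F (w *m adjmx w).
Proof.
set T := F (v *m adjmx w).
have [->|T_neq0] := eqVneq T 0; first by rewrite normr0 mul0rn addr_ge0.
have a_neq0 : `|T| != 0 by rewrite normr_eq0.
have a_real : (`|T|)^* = `|T| by rewrite conj_Creal // normr_real.
have conjT : T^* = `|T| ^+ 2 / T by rewrite normCK [T * _]mulrC mulfK.
(* the phase c = -T/|T| turns the cross terms into -2|T| *)
have := F_ge0 (v + (- (T / `|T|)) *: w).
rewrite F_outer_addZ (F_outer_conj v w) -/T rmorphN rmorphM /= fmorphV /= a_real conjT.
have -> : F (v *m adjmx v) + - (`|T| ^+ 2 / T / `|T|) * T + - (T / `|T|) * (`|T| ^+ 2 / T)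
    + - (T / `|T|) * - (`|T| ^+ 2 / T / `|T|) * F (w *m adjmx w)
    = F (v *m adjmx v) + F (w *m adjmx w) - `|T| *+ 2.
  by move: a_neq0 T_neq0; set a := `|T| => a_neq0 T_neq0; field; rewrite a_neq0.
by rewrite subr_ge0.
Qed.

End PositiveFunctional.

Lemma qform_id_tens_dual_le n m k (Phi : {linear 'M[C]_m -> 'M[C]_m})
    (Psi : 'M[C]_m -> 'M[C]_m) (X : 'M[C]_(n * m)) (v w : 'cV[C]_(n * m)) :
  psd X -> completely_positive Phi -> trace_preserving Phi -> is_dual_map Phi Psi ->
  unit_vec v -> unit_vec w -> (schmidt_rank v <= k)%N -> (schmidt_rank w <= k)%N ->
  cmod ((adjmx w *m id_tens Psi X *m v) 0 0) <= S_norm k X.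
Proof.
move=> X_psd Phi_cp Phi_tr dual v1 w1 v_rank w_rank.
pose F M := \tr (id_tens Phi M *m X).
have FD M N : F (M + N) = F M + F N by rewrite /F id_tensD mulmxDl mxtraceD.
have FZ a M : F (a *: M) = a * F M by rewrite /F id_tensZ -scalemxAl mxtraceZ.
have F_ge0 (u : 'cV[C]_(n * m)) : 0 <= F (u *m adjmx u).
  exact: mxtrace_psd_mul_ge0 (Phi_cp _ _ (psd_outer u)) X_psd.
have F_le (u : 'cV[C]_(n * m)) : unit_vec u -> (schmidt_rank u <= k)%N ->
    F (u *m adjmx u) <= ((S_norm k X)%:C)%C.
  move=> u1 u_rank; rewrite -[leRHS]mulr1 -u1.
  by apply: (mxtrace_id_tens_outer_le (k := k)) => // x; apply: psd_qform_le_S_norm.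
rewrite (qform_id_tens_dual _ _ _ dual); apply: cmod_le.
rewrite -(ler_pMn2r (n := 2)) //; apply: le_trans (F_outer_norm_le FD FZ F_ge0 v w) _.
by rewrite mulr2n lerD ?F_le.
Qed.

End SchmidtNormContraction.

Theorem corollary4p8 (R : realType) (n m k : nat)
  (Hmn : (m <= n)%N) (Hk1 : (1 <= k)%N) (Hkm : (k <= m)%N)
  (X : 'M[R[i]]_(n * m))
  (Phi : {linear 'M[R[i]]_m -> 'M[R[i]]_m}) (Phi_dual : 'M[R[i]]_m -> 'M[R[i]]_m) :
  psd X ->
  completely_positive Phi -> trace_preserving Phi ->
  is_dual_map Phi Phi_dual ->
  S_norm k (id_tens Phi_dual X) <= S_norm k X.
Proof.
move=> X_psd Phi_cp Phi_tr dual.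
have m_gt0 : (0 < m)%N := leq_trans Hk1 Hkm.
rewrite S_normE; apply: ge_sup.
  exact: S_norm_set_neq0 (leq_trans m_gt0 Hmn) m_gt0 Hk1.
move=> _ [v [w [v1 w1 v_rank w_rank ->]]].
exact: qform_id_tens_dual_le X_psd Phi_cp Phi_tr dual v1 w1 v_rank w_rank.
Qed.
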